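(* For every integer $k\ge 1$, let $G_k$ be the graph consisting of a path $u_1u_2\cdots u_{2^k-1}$ together with an independent set $\{v_0,\dots,v_{k-1}\}$ disjoint from the path, where $v_i$ is adjacent to $u_j$ if and only if $i$ is the largest integer such that $2^i$ divides $j$ (and there are no other edges). Then $G_k$ has $2^k+k-1$ vertices, is $\mathcal{O}_2$-free, does not contain $K_{3,3}$ as a subgraph, and has treewidth exactly $k$.
   Context: All graphs are finite and simple. Two vertex-disjoint subgraphs are independent if there is no edge between them. A graph is $\mathcal{O}_2$-free if it does not contain two vertex-disjoint cycles with no edge between them; equivalently, it has no induced subgraph that is a disjoint union of two cycles. *)

From mathcomp Require Import all_boot.
Set Implicit Arguments.
Unset Strict Implicit.
Unset Printing Implicit Defensive.

Definition is_cycle (T : finType) (e : rel T) (s : seq T) : bool :=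
  [&& 2 < size s, uniq s & cycle e s].

Definition O2_free (T : finType) (e : rel T) : Prop :=
  ~ exists (c1 c2 : seq T),
      [/\ is_cycle e c1, is_cycle e c2,
          (forall x, x \in c1 -> x \notin c2) &
          (forall x y, x \in c1 -> y \in c2 -> ~~ e x y)].

Definition has_K33_subgraph (T : finType) (e : rel T) : Prop :=
  exists f : ('I_3 + 'I_3)%type -> T,
    injective f /\ forall i j : 'I_3, e (f (inl i)) (f (inr j)).

Definition is_tree (I : finType) (t : rel I) : Prop :=
  [/\ 0 < #|I|, symmetric t, irreflexive t,
      (forall i j, connect t i j) &
      (forall s : seq I, ~~ is_cycle t s)].

Definition tree_decomposition (T : finType) (e : rel T)
    (I : finType) (t : rel I) (B : I -> {set T}) : Prop :=
  [/\ is_tree t,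
      (forall x : T, exists i, x \in B i),
      (forall x y : T, e x y -> exists i, (x \in B i) && (y \in B i)) &
      (forall x : T, forall i j, x \in B i -> x \in B j ->
          connect [rel a b | [&& t a b, x \in B a & x \in B b]] i j)].

Definition td_width (T I : finType) (B : I -> {set T}) : nat :=
  (\max_(i in I) #|B i|) - 1.

Definition treewidth_eq (T : finType) (e : rel T) (w : nat) : Prop :=
  (exists (I : finType) (t : rel I) (B : I -> {set T}),
      tree_decomposition e t B /\ td_width B = w) /\
  (forall (I : finType) (t : rel I) (B : I -> {set T}),
      tree_decomposition e t B -> w <= td_width B).

(* The graph G_k: path vertices inl a stands for u_(a+1), a < 2^k - 1;
   inr i stands for v_i, i < k. *)
Definition Gk_vertex (k : nat) : finType := ('I_(2 ^ k - 1) + 'I_k)%type.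

Definition Gk_adj (k : nat) : rel (Gk_vertex k) :=
  fun x y =>
    match x, y with
    | inl a, inl b => (a.+1 == b :> nat) || (b.+1 == a :> nat)
    | inl a, inr i => logn 2 a.+1 == i
    | inr i, inl a => logn 2 a.+1 == i
    | inr _, inr _ => false
    end.
Arguments Gk_adj k x y : clear implicits.

From mathcomp Require Import all_boot zify.
Set Implicit Arguments. Unset Strict Implicit. Unset Printing Implicit Defensive.

(* Each cycle of an induced pair of disjoint cycles must avoid every v_i.  Inductively, a
   cycle avoiding v_0, ..., v_(i-1) passes through a path vertex of 2-adic valuation exactly
   i: a path vertex of smaller valuation on the cycle cannot turn to its v-neighbour, which
   drags the whole stretch between the surrounding multiples of 2^i onto the cycle, and one
   of these two multiples has valuation i.  Hence each cycle contains a neighbour of v_i and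
   v_i lies on neither.  A cycle avoiding all v_i would need a path vertex of valuation k,
   which does not exist below 2^k.
   Two v's have no common neighbour, so each side of a K_(3,3) contains two path vertices,
   which would form a 4-cycle on the path.
   For the treewidth, an interval decomposition along a doubled copy of the path has bags
   of size at most k + 1.  Conversely G_k has k + 1 disjoint connected, pairwise adjacent
   branch sets; the bags meeting a connected set form a subtree of the decomposition tree,
   and pairwise intersecting subtrees of a tree share a node (Helly), so some bag meets all
   k + 1 branch sets. *)

Definition induced (T : finType) (e : rel T) (A : {set T}) : rel T :=
  [rel a b | [&& e a b, a \in A & b \in A]].

Definition connected_set (T : finType) (e : rel T) (A : {set T}) : Prop :=
  forall a b, a \in A -> b \in A -> connect (induced e A) a b.

Section Paths.
Variables (T : finType) (e : rel T).

Lemma induced_sub (A : {set T}) : subrel (induced e A) e.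
Proof. by move=> a b /and3P[]. Qed.

Lemma path_induced_sub (A : {set T}) a s :
  a \in A -> path (induced e A) a s -> {subset a :: s <= A}.
Proof.
elim: s a => [|b s IH] a aA /=; first by move=> _ x; rewrite inE => /eqP->.
case/andP=> /and3P[_ _ bA] ps x; rewrite inE => /orP[/eqP->//|].
exact: IH.
Qed.

Lemma path_induced_widen (A C : {set T}) a s :
  path (induced e A) a s -> {subset a :: s <= C} -> path (induced e C) a s.
Proof.
elim: s a => [|b s IH] a //= /andP[/and3P[eab _ _] ps] sub.
rewrite /= -andbA eab !sub ?inE ?eqxx ?orbT //=.
by apply: IH => // x xs; apply: sub; rewrite inE xs orbT.
Qed.

Lemma path_suffix x p s1 y s2 : x :: p = s1 ++ y :: s2 -> path e x p -> path e y s2.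
Proof.
case: s1 => [|z s1] /= [-> ->] //.
by rewrite cat_path /= => /andP[_ /andP[_ ->]].
Qed.

Lemma is_cycle_mem (c : seq T) : is_cycle e c -> exists x, x \in c.
Proof. by case/and3P; case: c => [|x c] //; exists x; rewrite inE eqxx. Qed.

Lemma is_cycle_nbrs (c : seq T) x : symmetric e -> is_cycle e c -> x \in c ->
  exists y z, [/\ y \in c, z \in c, y != z, e x y & e x z].
Proof.
move=> esym /and3P[sc uc cc] xc; case: (rot_to xc) => n s E.
have : 2 < size (x :: s) by rewrite -E size_rot.
have : uniq (x :: s) by rewrite -E rot_uniq.
have : cycle e (x :: s) by rewrite -E rot_cycle.
have mem y : y \in s -> y \in c by move=> ys; rewrite -(mem_rot n) E inE ys orbT.
case: s E mem => [|y s] // E mem; case/lastP: s E mem => [|r z] // E mem.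
move=> /= /andP[exy]; rewrite rcons_path last_rcons => /andP[_ ezx].
rewrite /= mem_rcons inE negb_or => /andP[_ /andP[/andP[yz _] _]] _.
exists y, z; split => //; last by rewrite esym.
- by apply: mem; rewrite inE eqxx.
- by apply: mem; rewrite inE mem_rcons inE eqxx orbT.
Qed.
End Paths.

Lemma connect_map (T U : finType) (f : T -> U) (R : rel U) p q :
  connect [rel a b | R (f a) (f b)] p q -> connect R (f p) (f q).
Proof.
case/connectP=> s ps ->; elim: s p ps => [|b s IH] p //= /andP[h ps].
exact: connect_trans (connect1 h) (IH _ ps).
Qed.

Section SubtreesHelly.
Variables (I : finType) (t : rel I).
Hypotheses (tsym : symmetric t) (tirr : irreflexive t)
  (tacyc : forall s, ~~ is_cycle t s).

Lemma acyclic_back_edge a s l q : path t a (rcons s l) -> uniq (a :: rcons s l) ->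
  q \in a :: s -> t l q -> q = last a s.
Proof.
move=> pth u qs tlq.
have [s1 [s2 E]] : exists s1 s2, a :: s = s1 ++ q :: s2.
  by case/splitPr: qs => s1 s2; exists s1, s2.
case: s2 E => [|z s2] E.
  by rewrite -[last a s]/(last a (a :: s)) E last_cat.
have E2 : a :: rcons s l = s1 ++ q :: z :: rcons s2 l by rewrite -rcons_cons E rcons_cat.
case/negP: (tacyc (q :: z :: rcons s2 l)); apply/and3P; split.
- by rewrite /= size_rcons.
- by move: u; rewrite E2 cat_uniq => /and3P[].
- move: (path_suffix E2 pth) => /= /andP[-> p2].
  by rewrite rcons_path p2 last_rcons.
Qed.

Definition leaf_in (S : {set I}) (l p : I) := forall q, q \in S -> t l q -> q = p.

Lemma exists_leaf (S : {set I}) a : a \in S -> exists2 l, l \in S & exists p, leaf_in S l p.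
Proof.
move=> aS.
pose P n := [exists s : n.-tuple I, uniq (a :: s) && path (induced t S) a s].
have P0 : exists n, P n by exists 0; apply/existsP; exists [tuple].
have Pub n : P n -> n <= #|S|.
  case/existsP=> s /andP[us ps].
  have : #|a :: s| <= #|S| by apply/subset_leq_card/subsetP; apply: path_induced_sub ps.
  by rewrite (card_uniqP us) /= size_tuple => /ltnW.
case: (ex_maxnP P0 Pub) => m /existsP[s /andP[us ps]] maxm.
have sS := path_induced_sub aS ps.
have closed q : q \in S -> t (last a s) q -> q \in a :: s.
  move=> qS tq; apply: contraT => qs.
  have uq : uniq (a :: rcons s q) by rewrite -rcons_cons rcons_uniq qs us.
  have pq : path (induced t S) a (rcons s q).
    by rewrite rcons_path ps /induced /= tq qS sS ?mem_last.
  have /maxm : P m.+1 by apply/existsP; exists [tuple of rcons s q]; exact/andP.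
  by rewrite ltnn.
case/lastP: s us ps sS closed => [|s l] us ps sS closed.
  exists a => //; exists a => q qS taq.
  by have := closed q qS taq; rewrite inE => /eqP.
exists l; first by apply: sS; rewrite inE mem_rcons inE eqxx orbT.
exists (last a s) => q qS tlq.
have := closed q qS; rewrite last_rcons => /(_ tlq).
rewrite -rcons_cons mem_rcons inE => /predU1P[ql|qs].
  by move: tlq; rewrite ql tirr.
exact: acyclic_back_edge (sub_path (@induced_sub _ _ S) ps) us qs tlq.
Qed.

Lemma connected_setD1_leaf (S A : {set I}) l p : A \subset S -> leaf_in S l p ->
  connected_set t A -> connected_set t (A :\ l).
Proof.
move=> AS hl cA a b; rewrite !inE => /andP[al aA] /andP[bl bA].
have /connectP[s ps eb] := cA a b aA bA; subst b.
move: bl; case: (shortenP ps) => s' ps' us' _ bl.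
have sub := path_induced_sub aA ps'.
apply/connectP; exists s' => //; apply: (path_induced_widen ps') => x xs.
rewrite !inE (sub x xs) andbT; apply/eqP => xl.
move: xs; rewrite {}xl inE eq_sym (negbTE al) /= => ls.
case/splitPr: ls us' ps' bl sub => s1 [|z s2] us' ps' bl sub.
  by move: bl; rewrite cats1 last_rcons eqxx.
move: ps'; rewrite cat_path /= => /andP[_ /andP[/and3P[t1 _ _] /andP[/and3P[t2 _ zA] _]]].
have y1 : last a s1 = p.
  apply: hl; last by rewrite tsym.
  by apply: (subsetP AS); apply: sub; rewrite -cat_cons mem_cat mem_last.
have z1 : z = p by apply: hl => //; apply: (subsetP AS).
move: us'; rewrite -cat_cons cat_uniq => /and3P[_ /hasPn /(_ z)].
by rewrite !inE eqxx orbT z1 -y1 -in_cons mem_last => /(_ isT).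
Qed.

Lemma connected_set_leaf_nbr (S A : {set I}) l p c : A \subset S -> leaf_in S l p ->
  connected_set t A -> l \in A -> c \in A -> c != l -> p \in A /\ p != l.
Proof.
move=> AS hl cA lA cA' cl.
have /connectP[[|q s] /= ps ec] := cA l c lA cA'; first by rewrite ec eqxx in cl.
case/andP: ps => /and3P[tlq _ qA] _.
rewrite -(hl q) ?(subsetP AS) //; split=> //.
by apply: contraTneq tlq => ->; rewrite tirr.
Qed.

Lemma subtrees_helly (J : finType) (j0 : J) (S : {set I}) (A : J -> {set I}) :
  (forall j, A j \subset S) -> (forall j, connected_set t (A j)) ->
  (forall j1 j2, A j1 :&: A j2 != set0) -> exists i, forall j, i \in A j.
Proof.
move: {2}#|S| (leqnn #|S|) => n; elim: n S A => [|n IH] S A hS AS cA Aint.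
  have /set0Pn[z] := Aint j0 j0; rewrite setIid => /(subsetP (AS j0)).
  by move: hS; rewrite leqn0 => /eqP/card0_eq ->; rewrite inE.
have /set0Pn[a aA] := Aint j0 j0; rewrite setIid in aA.
have aS := subsetP (AS j0) a aA.
have [S1|S2] := leqP #|S| 1.
  exists a => j; have /set0Pn[z] := Aint j j; rewrite setIid => zA.
  have := (card_le1P S1) a aS z; rewrite (subsetP (AS j) z zA) => /esym/eqP za.
  by rewrite -za.
have [l lS [p hl]] := exists_leaf aS.
case: (boolP [exists j, A j \subset [set l]]) => [/existsP[j /subsetP Al]|].
  exists l => j'; have /set0Pn[z] := Aint j j'; rewrite inE => /andP[zA zA'].
  by move: (Al z zA) zA'; rewrite inE => /eqP->.
rewrite negb_exists => /forallP Anl.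
have Ap j : l \in A j -> p \in A j /\ p != l.
  case/subsetPn: (Anl j) => c cA'; rewrite inE => cl lA.
  exact: connected_set_leaf_nbr (AS j) hl (cA j) lA cA' cl.
have [i Hi] : exists i, forall j, i \in A j :\ l.
  apply: (IH (S :\ l)).
  - by move: hS; rewrite (cardsD1 l S) lS.
  - by move=> j; apply: setSD.
  - by move=> j; apply: connected_setD1_leaf (AS j) hl (cA j).
  - move=> j1 j2; have /set0Pn[z] := Aint j1 j2; rewrite inE => /andP[z1 z2].
    apply/set0Pn; have [zl|zl] := eqVneq z l; last by exists z; rewrite !inE zl z1 z2.
    rewrite zl in z1 z2; have [p1 pl] := Ap j1 z1; have [p2 _] := Ap j2 z2.
    by exists p; rewrite !inE pl p1 p2.
by exists i => j; have := Hi j; rewrite inE => /andP[].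
Qed.
End SubtreesHelly.

Definition clique_minor_model (V J : finType) (e : rel V) (X : J -> {set V}) : Prop :=
  [/\ forall j, X j != set0,
      forall j, connected_set e (X j),
      forall j1 j2 x, x \in X j1 -> x \in X j2 -> j1 = j2 &
      forall j1 j2, j1 != j2 -> exists x y, [/\ x \in X j1, y \in X j2 & e x y]].

Section CliqueMinorWidth.
Variables (V I J : finType) (e : rel V) (t : rel I) (B : I -> {set V}) (X : J -> {set V}).
Hypotheses (TD : tree_decomposition e t B) (XM : clique_minor_model e X).

Lemma clique_minor_bag (j0 : J) : exists i, forall j, B i :&: X j != set0.
Proof.
case: TD => [[_ tsym tirr _ tacyc] Bcov Bedge Bsub].
case: XM => Xn Xc _ Xt.
pose A j := [set i | B i :&: X j != set0].
have meet j x a : x \in X j -> x \in B a -> a \in A j.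
  by move=> xX xa; rewrite inE; apply/set0Pn; exists x; rewrite inE xa.
have share j x a b : x \in X j -> x \in B a -> x \in B b -> connect (induced t (A j)) a b.
  move=> xX xa xb; apply: connect_sub (Bsub x a b xa xb) => c d /and3P[tcd xc xd].
  by apply: connect1; rewrite /induced /= tcd !(meet j x).
have [i Hi] : exists i, forall j, i \in A j.
  apply: (subtrees_helly tsym tirr tacyc j0 (S := [set: I])) => [j|j|j1 j2].
  - exact: subsetT.
  - move=> a b; rewrite !inE => /set0Pn[x]; rewrite inE => /andP[xa xX].
    case/set0Pn=> y; rewrite inE => /andP[yb yX].
    have /connectP[s ps ey] := Xc j x y xX yX.
    elim: s x a xa xX ps ey {yX} => [|z s IH] x a xa xX /=.
      by move=> _ ey; subst y; exact: share xX xa yb.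
    case/andP=> /and3P[exz _ zX] ps ey; have [c /andP[xc zc]] := Bedge x z exz.
    exact: connect_trans (share j x a c xX xa xc) (IH z c zc zX ps ey).
  - apply/set0Pn; have [<-|ne] := eqVneq j1 j2.
      have /set0Pn[x xX] := Xn j1; have [i xi] := Bcov x.
      by exists i; rewrite setIid (meet j1 x).
    have [x [y [xX yX exy]]] := Xt j1 j2 ne; have [i /andP[xi yi]] := Bedge x y exy.
    by exists i; rewrite inE (meet j1 x) ?(meet j2 y).
by exists i => j; have := Hi j; rewrite inE.
Qed.

Lemma td_width_clique_minor : #|J| - 1 <= td_width B.
Proof.
case: (pickP (@predT J)) => [j0 _|J0]; last by rewrite eq_card0.
have [i Hi] := clique_minor_bag j0.
have f j : {x | x \in B i :&: X j} by apply: sigW; apply/set0Pn.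
have fBX j : sval (f j) \in B i /\ sval (f j) \in X j by apply/andP; rewrite -in_setI (svalP (f j)).
have finj : injective (fun j => sval (f j)).
  move=> j1 j2 eq; case: XM => _ _ Xd _; apply: (Xd j1 j2 (sval (f j1))).
    by case: (fBX j1).
  by rewrite eq; case: (fBX j2).
have cardJ : #|J| <= #|B i|.
  rewrite -cardsT -(card_imset [set: J] finj); apply/subset_leq_card/subsetP.
  by move=> x /imsetP[j _ ->]; case: (fBX j).
by apply: leq_sub2r; apply: leq_trans cardJ (leq_bigmax_cond _ _).
Qed.
End CliqueMinorWidth.

Section IntervalDecomposition.
Variable M : nat.

Definition ord_path : rel 'I_M := fun p q => (p.+1 == q :> nat) || (q.+1 == p :> nat).

Lemma ord_path_sym : symmetric ord_path.
Proof. by move=> p q; rewrite /ord_path orbC. Qed.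

(* A maximal vertex of a cycle would need two distinct smaller neighbours. *)
Lemma ord_path_acyclic s : ~~ is_cycle ord_path s.
Proof.
apply/negP => cy; have [x0 x0s] := is_cycle_mem cy.
case: (arg_maxnP (fun y : 'I_M => val y) (x0s : (mem s) x0)) => m ms mmax.
have [y [z [ys zs yz my mz]]] := is_cycle_nbrs ord_path_sym cy ms.
have hy : y <= m := mmax y ys; have hz : z <= m := mmax z zs.
move: my mz; rewrite /ord_path => /orP[] /eqP h1 /orP[] /eqP h2; try lia.
have /val_inj yz' : (y : nat) = z by lia.
by rewrite yz' eqxx in yz.
Qed.

Lemma connect_ord_path (A : pred nat) (R : rel 'I_M) :
  (forall p q : 'I_M, ord_path p q -> A p -> A q -> R p q) ->
  (forall a b c, a <= b <= c -> A a -> A c -> A b) ->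
  forall p q : 'I_M, A p -> A q -> connect R p q.
Proof.
move=> HR Aconv.
have reach n : forall p q : 'I_M, q = p + n :> nat -> A p -> A q ->
    connect R p q /\ connect R q p.
  elim: n => [|n IH] p q eq Ap Aq.
    by have -> : q = p by apply: val_inj; rewrite /= eq addn0.
  have lt : p + n < M by have := ltn_ord q; lia.
  have Aq' : A (Ordinal lt) by apply: (Aconv p _ q) => //=; lia.
  have [c1 c2] := IH p (Ordinal lt) erefl Ap Aq'.
  have r1 : R (Ordinal lt) q by apply: HR => //; rewrite /ord_path /= eq addnS eqxx.
  have r2 : R q (Ordinal lt) by apply: HR => //; rewrite /ord_path /= eq addnS eqxx orbT.
  by split; [apply: connect_trans c1 (connect1 r1) | apply: connect_trans (connect1 r2) c2].
move=> p q Ap Aq; case: (leqP p q) => h.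
  by case: (reach (q - p) p q (esym (subnKC h)) Ap Aq).
by case: (reach (p - q) q p (esym (subnKC (ltnW h))) Aq Ap).
Qed.

Variables (V : finType) (e : rel V) (lo hi : V -> nat).

Definition interval_bag (p : 'I_M) : {set V} := [set x | lo x <= p <= hi x].

Lemma interval_td : 0 < M -> (forall x, lo x <= hi x) -> (forall x, lo x < M) ->
  (forall x y, e x y -> exists p : 'I_M, (lo x <= p <= hi x) && (lo y <= p <= hi y)) ->
  tree_decomposition e ord_path interval_bag.
Proof.
move=> M0 lohi loM Hedge; split.
- split; first by rewrite card_ord.
  + exact: ord_path_sym.
  + by move=> p; rewrite /ord_path; apply/negP => /orP[] /eqP; lia.
  + by move=> p q; apply: (@connect_ord_path predT).
  + exact: ord_path_acyclic.
- by move=> x; exists (Ordinal (loM x)); rewrite inE /= leqnn lohi.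
- by move=> x y /Hedge [p hp]; exists p; rewrite !inE.
- move=> x p q; rewrite !inE => hp hq.
  apply: (@connect_ord_path (fun n => lo x <= n <= hi x)) => //= [a b ab Aa Ab|a b c].
    by rewrite /= ab !inE Aa Ab.
  lia.
Qed.
End IntervalDecomposition.

Lemma interval_closed (P : nat -> Prop) lo hi j : lo < j < hi -> P j ->
  (forall n, lo < n < hi -> P n -> P n.-1 /\ P n.+1) -> P lo /\ P hi.
Proof.
move=> jin Pj step; split.
  have L m : m <= j - lo -> P (j - m).
    elim: m => [|m IH] hm; first by rewrite subn0.
    by rewrite subnS; apply: (proj1 (step _ _ (IH _))); lia.
  by have := L (j - lo) (leqnn _); rewrite subKn //; lia.
have R m : m <= hi - j -> P (j + m).
  elim: m => [|m IH] hm; first by rewrite addn0.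
  by rewrite addnS; apply: (proj2 (step _ _ (IH _))); lia.
by have := R (hi - j) (leqnn _); rewrite subnKC //; lia.
Qed.

Lemma logn2_odd p : odd p -> logn 2 p = 0.
Proof. by move=> op; rewrite logn_coprime // coprime2n. Qed.

Lemma logn2_pow_odd i q : odd q -> logn 2 (2 ^ i * q) = i.
Proof.
move=> oq; have q0 : 0 < q by case: q oq.
by rewrite lognM ?expn_gt0 // pfactorK // logn2_odd ?addn0.
Qed.

Lemma logn2_between i q n : 2 ^ i * q < n < 2 ^ i * q + 2 ^ i -> logn 2 n < i.
Proof.
move=> /andP[h1 h2]; rewrite ltnNge -pfactor_dvdn //; last by lia.
apply/negP => /dvdnP[m nm]; move: h1 h2.
by rewrite nm (mulnC m) addnC -mulnS !ltn_pmul2l ?expn_gt0 //; lia.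
Qed.

Section Gk.
Variable k : nat.
Local Notation N := (2 ^ k - 1).
Local Notation V := (Gk_vertex k).
Local Notation e := (Gk_adj k).

Lemma Gk_adj_sym : symmetric e.
Proof. by case=> [a|i] [b|j] //=; rewrite orbC. Qed.

Lemma card_Gk_vertex : #|V| = 2 ^ k + k - 1.
Proof.
rewrite card_sum !card_ord; have : 0 < 2 ^ k by rewrite expn_gt0.
lia.
Qed.

Lemma Gk_adj_inl (a : 'I_N) w : e (inl a) w ->
  (exists2 b : 'I_N, w = inl b & b.+1 = a \/ a.+1 = b :> nat) \/
  (exists2 i : 'I_k, w = inr i & logn 2 a.+1 = i).
Proof.
case: w => [b|i] /=; last by move/eqP; right; exists i.
case/orP=> /eqP ab.
- by left; exists b => //; right.
- by left; exists b => //; left.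
Qed.

Lemma Gk_adj_inr_inj i i' w : e (inr i) w -> e (inr i') w -> i = i'.
Proof. by case: w => [a|//] /eqP ai /eqP ai'; apply: val_inj; rewrite /= -ai -ai'. Qed.

(* Path vertices are indexed from 1 here, as in the paper: u_j is [inl a] with [a.+1 = j]. *)
Definition u_on (c : seq V) (j : nat) : Prop := exists2 a : 'I_N, a.+1 = j & inl a \in c.

Lemma u_on_gt0 c j : u_on c j -> 0 < j.
Proof. by case=> a <-. Qed.

Lemma cycle_path_nbrs c (a : 'I_N) : is_cycle e c -> inl a \in c ->
  (forall i : 'I_k, logn 2 a.+1 = i -> inr i \notin c) -> u_on c a /\ u_on c a.+2.
Proof.
move=> cy ac noV.
have [y [z [yc zc yz ey ez]]] := is_cycle_nbrs Gk_adj_sym cy ac.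
case: (Gk_adj_inl ey) => [[b yb hb]|[i yi /noV]]; last by rewrite -yi yc.
case: (Gk_adj_inl ez) => [[b' zb hb']|[i zi /noV]]; last by rewrite -zi zc.
subst y z; have bb : (b : nat) != b' by apply: contra yz => /eqP/val_inj->.
case: hb hb' => hb [] hb'; try by move: bb; lia.
- by split; [exists b | exists b'] => //; rewrite -hb'.
- by split; [exists b' | exists b] => //; rewrite -hb.
Qed.

Lemma cycle_path_nbr c (a : 'I_N) : is_cycle e c -> inl a \in c -> u_on c a \/ u_on c a.+2.
Proof.
move=> cy ac.
have [y [z [yc zc yz ey ez]]] := is_cycle_nbrs Gk_adj_sym cy ac.
case: (Gk_adj_inl ey) => [[b yb hb]|[i yi _]].
  by case: hb => hb; [left | right]; exists b; rewrite -?yb //; lia.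
case: (Gk_adj_inl ez) => [[b zb hb]|[i' zi _]].
  by case: hb => hb; [left | right]; exists b; rewrite -?zb //; lia.
have ii' : i = i' by apply: (@Gk_adj_inr_inj _ _ (inl a)); rewrite Gk_adj_sym -?yi -?zi.
by rewrite yi zi ii' eqxx in yz.
Qed.

Definition avoids_v (c : seq V) (i : nat) := forall i' : 'I_k, i' < i -> inr i' \notin c.

Lemma cycle_low_valuation c i : is_cycle e c -> avoids_v c i ->
  (forall j, u_on c j -> logn 2 j != i) -> exists2 j, u_on c j & logn 2 j < i.
Proof.
move=> cy av noi.
have [x xc] := is_cycle_mem cy.
have [a ac] : exists a : 'I_N, inl a \in c.
  case: x xc => [a|i0] xc; first by exists a.
  by have [[b|?] [_ [bc _ _ ey _]]] := is_cycle_nbrs Gk_adj_sym cy xc; first exists b.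
have ua : u_on c a.+1 by exists a.
have [lt|ge] := ltnP (logn 2 a.+1) i; first by exists a.+1.
have ev : ~~ odd a.+1 by apply/negP => /logn2_odd l0; have := noi _ ua; lia.
have odd_low j : u_on c j -> odd j -> logn 2 j < i.
  by move=> uj oj; have := noi j uj; rewrite logn2_odd //; lia.
by case: (cycle_path_nbr cy ac) => uj; [exists a | exists a.+2] => //;
  apply: odd_low => //; move: ev => /=; rewrite ?negbK.
Qed.

Lemma cycle_hits_valuation c i : is_cycle e c -> avoids_v c i ->
  exists2 a : 'I_N, inl a \in c & logn 2 a.+1 = i.
Proof.
move=> cy av.
case: (boolP [exists a : 'I_N, (inl a \in c) && (logn 2 a.+1 == i)]).
  by case/existsP=> a /andP[ac /eqP]; exists a.
rewrite negb_exists => /forallP noi; exfalso.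
have {}noi j : u_on c j -> logn 2 j != i by case=> a <- ac; have := noi a; rewrite ac.
have [j0 uj0 lj0] := cycle_low_valuation cy av noi.
have d0 : 0 < 2 ^ i by rewrite expn_gt0.
set q := j0 %/ 2 ^ i; have ej0 := divn_eq j0 (2 ^ i); rewrite -/q in ej0.
have r0 : 0 < j0 %% 2 ^ i.
  by rewrite lt0n -/(dvdn _ _) pfactor_dvdn ?(u_on_gt0 uj0) // -ltnNge.
have rd := ltn_pmod j0 d0.
have [uL uR] : u_on c (2 ^ i * q) /\ u_on c (2 ^ i * q + 2 ^ i).
  apply: (interval_closed (j := j0)) => //; first by apply/andP; lia.
  move=> n nin [a an ac]; rewrite -an /=.
  apply: (cycle_path_nbrs cy ac) => i' li'; apply: av.
  by rewrite -li' an (logn2_between nin).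
have q0 : 0 < q by have := u_on_gt0 uL; rewrite muln_gt0 => /andP[].
case: (boolP (odd q)) => oq; first by have := noi _ uL; rewrite logn2_pow_odd ?eqxx.
by have := noi _ uR; rewrite -mulnSr logn2_pow_odd ?eqxx.
Qed.

Lemma logn2_lt_k (a : 'I_N) : logn 2 a.+1 < k.
Proof.
rewrite ltnNge -pfactor_dvdn //; apply/negP => /(dvdn_leq (ltn0Sn _)).
have := ltn_ord a; have : 0 < 2 ^ k by rewrite expn_gt0.
lia.
Qed.

Lemma independent_cycles_avoid_v c1 c2 i : is_cycle e c1 -> is_cycle e c2 ->
  (forall x y, x \in c1 -> y \in c2 -> ~~ e x y) -> avoids_v c1 i -> avoids_v c2 i ->
  avoids_v c1 i.+1.
Proof.
move=> cy1 cy2 ind av1 av2 i'; rewrite ltnS leq_eqVlt => /predU1P[ei|]; last exact: av1.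
have [a ac la] := cycle_hits_valuation cy2 av2.
by apply/negP => vc; have := ind _ _ vc ac; rewrite /= la ei eqxx.
Qed.

Lemma Gk_O2_free : O2_free e.
Proof.
case=> c1 [c2 [cy1 cy2 _ ind]].
have ind' x y : x \in c2 -> y \in c1 -> ~~ e x y by move=> x2 y1; rewrite Gk_adj_sym ind.
have av i : avoids_v c1 i /\ avoids_v c2 i.
  elim: i => [|i [av1 av2]]; first by split.
  by split; [apply: independent_cycles_avoid_v cy1 cy2 ind av1 av2
             | apply: independent_cycles_avoid_v cy2 cy1 ind' av2 av1].
have [a _ la] := cycle_hits_valuation cy1 (proj1 (av k)).
by have := logn2_lt_k a; rewrite la ltnn.
Qed.

Lemma K33_side_path_vertices (g : 'I_3 -> V) w : injective g ->
  (forall a, e (g a) w) -> exists a1 a2 x1 x2, [/\ a1 != a2, g a1 = inl x1 & g a2 = inl x2].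
Proof.
move=> ginj gw.
pose A := [set a | if g a is inl _ then true else false].
have cAC : #|~: A| <= 1.
  apply/card_le1_eqP => a1 a2; rewrite !inE.
  case E1 : (g a1) => [//|i1]; case E2 : (g a2) => [//|i2] _ _; apply: ginj.
  by move: (gw a1) (gw a2); rewrite E1 E2 => h1 h2; rewrite (Gk_adj_inr_inj h1 h2).
have /card_gt1P[a1 [a2 [a1A a2A a12]]] : 1 < #|A|.
  by have := cardsC A; rewrite card_ord; lia.
move: a1A a2A; rewrite !inE; case E1 : (g a1) => [x1|//]; case E2 : (g a2) => [x2|//] _ _.
by exists a1, a2, x1, x2.
Qed.

Lemma Gk_no_K33 : ~ has_K33_subgraph e.
Proof.
case=> f [finj fe]; pose o := @Ordinal 3 0 isT.
have [a1 [a2 [x1 [x2 [a12 E1 E2]]]]] := K33_side_path_vertices (w := f (inr o))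
  (fun _ _ eq => @inl_inj _ _ _ _ (finj _ _ eq)) (fe ^~ o).
have [b1 [b2 [y1 [y2 [b12 F1 F2]]]]] := K33_side_path_vertices (w := f (inl o))
  (fun _ _ eq => @inr_inj _ _ _ _ (finj _ _ eq)) (fun b => etrans (Gk_adj_sym _ _) (fe o b)).
have nx : (x1 : nat) != x2.
  by apply: contra a12 => /eqP/val_inj ex; apply/eqP/inl_inj/finj; rewrite E1 E2 ex.
have ny : (y1 : nat) != y2.
  by apply: contra b12 => /eqP/val_inj ey; apply/eqP/inr_inj/finj; rewrite F1 F2 ey.
move: (fe a1 b1) (fe a1 b2) (fe a2 b1) (fe a2 b2) nx ny; rewrite E1 E2 F1 F2 /=.
by do 4 case/orP=> /eqP ?; lia.
Qed.
End Gk.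

Section GkLowerBound.
Variable k : nat.
Hypothesis k0 : 0 < k.
Local Notation N := (2 ^ k - 1).
Local Notation V := (Gk_vertex k).
Local Notation e := (Gk_adj k).

(* Branch sets of a K_(k+1) minor: X_0 = {v_0}, X_1 = {u_1, u_2, v_1} and
   X_j = {u_(2^(j-1)+1), ..., u_(2^j), v_j} otherwise, where v_k does not exist.
   For j = 0 the bound [branch_lo 0 = 1] leaves no path vertex. *)
Definition branch_lo (j : nat) := if j == 1 then 0 else 2 ^ j.-1.

Definition branch (j : 'I_k.+1) : {set V} := [set x : V |
  match x with inl a => branch_lo j < a.+1 <= 2 ^ j | inr i => (i : nat) == j end].

Lemma branch_lo_lt j : 0 < j -> branch_lo j < 2 ^ j.
Proof.
move=> j0; rewrite /branch_lo; case: eqP => [-> //|_].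
have := expnS 2 j.-1; rewrite prednK // => ->.
have : 0 < 2 ^ j.-1 by rewrite expn_gt0.
lia.
Qed.

Lemma branch_connected j : connected_set e (branch j).
Proof.
set R := induced e (branch j).
have Rsym : symmetric R by move=> a b; rewrite /R /induced /= Gk_adj_sym [_ && (b \in _)]andbC.
have vv (i i' : 'I_k) : inr i \in branch j -> inr i' \in branch j -> connect R (inr i) (inr i').
  by rewrite !inE => /eqP h1 /eqP h2; have -> : i = i' by apply: val_inj; rewrite /= h1 h2.
have uu (a b : 'I_N) : inl a \in branch j -> inl b \in branch j -> connect R (inl a) (inl b).
  move=> aX bX; apply: (@connect_map _ _ inl R).
  apply: (@connect_ord_path N (fun n => branch_lo j < n.+1 <= 2 ^ j)).
  - by move=> p q pq Ap Aq; rewrite /R /induced /= !inE Ap Aq !andbT.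
  - by move=> a' b' c' /=; lia.
  - by move: aX; rewrite inE.
  - by move: bX; rewrite inE.
have uv (a : 'I_N) (i : 'I_k) : inl a \in branch j -> inr i \in branch j -> connect R (inl a) (inr i).
  move=> aX iX; move: (iX); rewrite inE => /eqP ij.
  have j0 : 0 < j by move: aX; rewrite inE; case: posnP => // ->; rewrite /branch_lo /=; lia.
  have p0 : 0 < 2 ^ j by rewrite expn_gt0.
  have jk : 2 ^ j < 2 ^ k by rewrite ltn_exp2l // -ij.
  have lt : 2 ^ j - 1 < N by lia.
  have tX : inl (Ordinal lt) \in branch j by rewrite inE /=; have := branch_lo_lt j0; lia.
  apply: connect_trans (uu a _ aX tX) (connect1 _).
  by rewrite /R /induced /= tX iX !andbT subn1 prednK // pfactorK // ij.
case=> [a|i] [b|i'] xX yX; [exact: uu | exact: uv | | exact: vv].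
by rewrite (sym_connect_sym Rsym); apply: uv.
Qed.

Lemma branch_nonempty j : branch j != set0.
Proof.
apply/set0Pn; have [jk|] := ltnP j k; first by exists (inr (Ordinal jk)); rewrite inE.
rewrite leq_eqVlt ltnNge -ltnS ltn_ord orbF => /eqP ejk.
have := expnS 2 k.-1; rewrite prednK // => e2k.
have : 0 < 2 ^ k.-1 by rewrite expn_gt0.
have lt : 2 ^ k - 2 < N by lia.
exists (inl (Ordinal lt)); rewrite inE /= -ejk /branch_lo.
case: eqP => [k1|k1]; first by rewrite k1.
have : 1 < 2 ^ k.-1 by rewrite -[1]/(2 ^ 0) ltn_exp2l //; lia.
lia.
Qed.

Lemma branch_lo_disjoint j1 j2 n : j1 < j2 ->
  branch_lo j1 < n <= 2 ^ j1 -> branch_lo j2 < n <= 2 ^ j2 -> False.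
Proof.
move=> lt /andP[h1 h2] /andP[h3 h4].
case: (posnP j1) => [j10|j10]; first by move: h1 h2; rewrite j10 /branch_lo /=; lia.
have : 2 ^ j1 <= 2 ^ j2.-1 by rewrite leq_pexp2l //; lia.
by move: h3; rewrite /branch_lo; case: eqP; lia.
Qed.

Lemma branch_disjoint j1 j2 x : x \in branch j1 -> x \in branch j2 -> j1 = j2.
Proof.
case: x => [a|i]; rewrite !inE => h1 h2; apply: val_inj; last by rewrite /= -(eqP h1) -(eqP h2).
case: (ltngtP j1 j2) => // lt; exfalso.
- exact: branch_lo_disjoint lt h1 h2.
- exact: branch_lo_disjoint lt h2 h1.
Qed.

(* v_(j1) sees u_(2^(j2-1) + 2^(j1)) when j2 >= j1 + 2; consecutive branch sets meet
   along the path, and X_0 = {v_0} sees u_1 in X_1. *)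
Lemma branch_touch (j1 j2 : 'I_k.+1) : j1 < j2 ->
  exists x y, [/\ x \in branch j1, y \in branch j2 & e x y].
Proof.
move=> lt; have j2k : (j2 : nat) <= k by rewrite -ltnS.
have j1k : (j1 : nat) < k by lia.
have p2k : 2 ^ j2 <= 2 ^ k by rewrite leq_pexp2l.
have [far|near] := leqP (j1 + 2) j2.
  set m := j2.-1 - j1.
  have em : 2 ^ j2.-1 = 2 ^ j1 * 2 ^ m by rewrite -expnD subnKC //; lia.
  have pm : 2 <= 2 ^ m by rewrite -[2]/(2 ^ 1) leq_pexp2l //; lia.
  have p1 : 0 < 2 ^ j1 by rewrite expn_gt0.
  have := expnS 2 j2.-1; rewrite prednK; last by lia.
  move=> e2; have h : 2 * 2 ^ j1 <= 2 ^ j1 * 2 ^ m by rewrite mulnC leq_pmul2l.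
  have lt1 : 2 ^ j2.-1 + 2 ^ j1 - 1 < N by nia.
  exists (inr (Ordinal j1k)), (inl (Ordinal lt1)); split; rewrite ?inE //=.
    by rewrite /branch_lo; case: eqP => [?|_]; [lia | apply/andP; split; nia].
  rewrite subn1 prednK; last by nia.
  rewrite em -{2}(muln1 (2 ^ j1)) -mulnDr logn2_pow_odd //.
  by rewrite oddD oddX; case: (m) pm.
have p2 : 2 <= 2 ^ k by rewrite -[2]/(2 ^ 1) leq_pexp2l.
case: (posnP j1) => j10.
  have lt1 : 0 < N by lia.
  have ej2 : (j2 : nat) = 1 by lia.
  by exists (inr (Ordinal j1k)), (inl (Ordinal lt1)); rewrite !inE /= ej2 j10 logn1.
have ej2 : (j2 : nat) = j1.+1 by lia.
have := expnS 2 j1; have p1 : 2 <= 2 ^ j1 by rewrite -[2]/(2 ^ 1) leq_pexp2l.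
rewrite -ej2 => e2; have lta : 2 ^ j1 - 1 < N by lia.
have ltb : 2 ^ j1 < N by lia.
exists (inl (Ordinal lta)), (inl (Ordinal ltb)); rewrite !inE /= ej2.
rewrite subn1 prednK ?expn_gt0 // eqxx leqnn andbT branch_lo_lt //.
by rewrite /branch_lo eqSS eqn0Ngt j10 /= expnS; split=> //; lia.
Qed.

Lemma Gk_clique_minor : clique_minor_model e branch.
Proof.
split; [exact: @branch_nonempty | exact: @branch_connected | exact: @branch_disjoint |].
move=> j1 j2; case: (ltngtP j1 j2) => [lt|lt|/val_inj->]; last by rewrite eqxx.
- by move=> _; apply: branch_touch.
- by move=> _; have [x [y [xX yX exy]]] := branch_touch lt; exists y, x; rewrite Gk_adj_sym.
Qed.

Lemma Gk_td_width_ge (I : finType) (t : rel I) (B : I -> {set V}) :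
  tree_decomposition e t B -> k <= td_width B.
Proof.
by move=> TD; have := td_width_clique_minor TD Gk_clique_minor; rewrite card_ord subn1.
Qed.
End GkLowerBound.

Lemma card_set_sum (A B : finType) (X : {set A + B}) :
  #|X| <= #|[set a | inl a \in X]| + #|[set b | inr b \in X]|.
Proof.
have sub : X \subset inl @: [set a | inl a \in X] :|: inr @: [set b | inr b \in X].
  by apply/subsetP => -[a|b] xX; rewrite !inE; apply/orP; [left | right];
    apply/imsetP; [exists a | exists b]; rewrite ?inE.
apply: leq_trans (subset_leq_card sub) (leq_trans (leq_card_setU _ _) _).
by apply: leq_add; apply: leq_imset_card.
Qed.

Section GkUpperBound.
Variable k : nat.
Hypothesis k0 : 0 < k.
Local Notation N := (2 ^ k - 1).
Local Notation V := (Gk_vertex k).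
Local Notation e := (Gk_adj k).
Local Notation M := (2 ^ k.+1 - 2).

(* Positions are doubled: u_(a+1) spans [2a-1, 2a+1] and v_i spans from its first
   neighbour u_(2^i) to its last neighbour u_(2^k - 2^i).  An even position then
   holds one path vertex, an odd one two path vertices but not v_(k-1), whose span
   is the single even position 2^k - 2. *)
Definition span_lo (x : V) : nat :=
  match x with inl a => (2 * a).-1 | inr i => 2 ^ i.+1 - 2 end.
Definition span_hi (x : V) : nat :=
  match x with inl a => 2 * a + 1 | inr i => 2 ^ k.+1 - 2 ^ i.+1 - 2 end.

Local Notation bag := (@interval_bag M _ span_lo span_hi).

Lemma pow2_bounds (i : 'I_k) : 2 <= 2 ^ i.+1 <= 2 ^ k.
Proof. by apply/andP; split; [rewrite -[2]expn1 leq_pexp2l | rewrite leq_pexp2l]. Qed.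

Lemma logn2_bounds j i : 0 < j < 2 ^ k -> logn 2 j = i -> i < k ->
  2 ^ i <= j /\ j + 2 ^ i <= 2 ^ k.
Proof.
move=> /andP[j0 jk] lj ik.
have /dvdnP[m jm] : 2 ^ i %| j by rewrite pfactor_dvdn // lj.
have ek : 2 ^ k = 2 ^ (k - i) * 2 ^ i by rewrite -expnD subnK // ltnW.
have m0 : 0 < m by move: j0; rewrite jm muln_gt0 => /andP[].
have : m < 2 ^ (k - i) by move: jk; rewrite jm ek ltn_pmul2r ?expn_gt0.
by rewrite jm ek => mlt; split; [rewrite leq_pmull | rewrite addnC -mulSn leq_pmul2r ?expn_gt0].
Qed.

Lemma Gk_interval_td : tree_decomposition e (@ord_path M) bag.
Proof.
have [? ?] : 2 ^ k.+1 = 2 * 2 ^ k /\ 2 <= 2 ^ k.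
  by split; [rewrite expnS | rewrite -[2]expn1 leq_pexp2l].
apply: interval_td => [|[a|i]|[a|i]|]; rewrite /= ?ltnS; try lia.
- by have := pow2_bounds i; lia.
- by have := ltn_ord a; lia.
- by have := pow2_bounds i; lia.
have uu (a b : 'I_N) : a.+1 = b -> exists p : 'I_M,
    (span_lo (inl a) <= p <= span_hi (inl a)) && (span_lo (inl b) <= p <= span_hi (inl b)).
  move=> ab; have lt : 2 * a + 1 < M by have := ltn_ord b; lia.
  by exists (Ordinal lt); rewrite /=; lia.
have uv (a : 'I_N) (i : 'I_k) : logn 2 a.+1 = i -> exists p : 'I_M,
    (span_lo (inl a) <= p <= span_hi (inl a)) && (span_lo (inr i) <= p <= span_hi (inr i)).
  move=> li; have aN := ltn_ord a; have /andP[? ?] := pow2_bounds i.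
  have [? ?] := logn2_bounds (j := a.+1) ltac:(lia) li (ltn_ord i).
  have e2 := expnS 2 i; have lt : 2 * a < M by lia.
  by exists (Ordinal lt); rewrite /=; lia.
case=> [a|i] [b|j] //= => [/orP[] /eqP ab|/eqP|/eqP ai].
- exact: uu.
- by have [p hp] := uu b a ab; exists p; rewrite andbC.
- exact: uv.
- by have [p hp] := uv b i ai; exists p; rewrite andbC.
Qed.

(* [a |-> 2a == p+1] is injective on the path vertices of a bag, and constant when p is even. *)
Lemma card_bag_path (p : 'I_M) :
  #|[set a : 'I_N | inl a \in bag p]| <= (if odd p then 2 else 1).
Proof.
set A := [set a | _]; pose g (a : 'I_N) := 2 * a == p.+1.
have ginj : {in A &, injective g}.
  move=> a1 a2; rewrite !inE /g /= => /andP[h1 h2] /andP[h3 h4].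
  by case: eqP; case: eqP => //= *; apply: ord_inj; lia.
rewrite -(card_in_imset ginj); case: ifP => op.
  by apply: leq_trans (max_card _) _; rewrite card_bool.
have : g @: A \subset [set false].
  apply/subsetP => b /imsetP[a _ ->]; rewrite inE /g; apply/eqP/negbTE/eqP.
  by move/(congr1 odd); rewrite oddM /= op.
by move/subset_leq_card; rewrite cards1.
Qed.

Lemma card_bag_v (p : 'I_M) :
  #|[set i : 'I_k | inr i \in bag p]| <= (if odd p then k.-1 else k).
Proof.
case: ifP => op; last by apply: leq_trans (max_card _) _; rewrite card_ord.
have lt : k.-1 < k by lia.
have : [set i : 'I_k | inr i \in bag p] \subset [set~ Ordinal lt].
  apply/subsetP => i; rewrite !inE /= => /andP[h1 h2]; apply/eqP => ei.
  move: h1 h2; rewrite ei /= prednK // => h1 h2.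
  have := expnS 2 k.-1; rewrite prednK // => ?; have := expnS 2 k.
  by have := odd_double_half p; rewrite op -muln2 /=; lia.
by move/subset_leq_card; rewrite cardsC1 card_ord.
Qed.

Lemma card_bag (p : 'I_M) : #|bag p| <= k.+1.
Proof.
apply: leq_trans (card_set_sum _) (leq_trans (leq_add (card_bag_path p) (card_bag_v p)) _).
by case: ifP; lia.
Qed.

Lemma Gk_interval_td_width : td_width bag = k.
Proof.
apply/eqP; rewrite eqn_leq (Gk_td_width_ge k0 Gk_interval_td) andbT.
by rewrite /td_width leq_subLR add1n; apply/bigmax_leqP => p _; apply: card_bag.
Qed.
End GkUpperBound.

Theorem mainTheorem3 (k : nat) : 0 < k ->
  [/\ #|Gk_vertex k| = 2 ^ k + k - 1,
      O2_free (Gk_adj k),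
      ~ has_K33_subgraph (Gk_adj k) &
      treewidth_eq (Gk_adj k) k].
Proof.
move=> k0; split; [exact: card_Gk_vertex | exact: Gk_O2_free | exact: Gk_no_K33 |].
split; last by move=> I t B; apply: Gk_td_width_ge.
by exists 'I_(2 ^ k.+1 - 2), (@ord_path _), (interval_bag (@span_lo k) (@span_hi k));
  split; [exact: Gk_interval_td | exact: Gk_interval_td_width].
Qed.
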